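(* Let $q\geq 2$, $d_1\geq 1$, $d_2\geq 1$ be integers with $\gcd(d_1,d_2)=1$. Then there exists an integer $c$ with $\gcd(c,q-1)=1$ and \[ \gcd(cd_1-d_2,\,q-1)=\begin{cases}2 & \text{if } q,\ d_1,\ d_2 \text{ are all odd},\\ 1 & \text{otherwise}.\end{cases} \] *)

From Stdlib Require Export ZArith.

(* For every odd prime p dividing q - 1 at most two residues of c modulo p are
   forbidden (p | c and p | c d1 - d2), so some residue is allowed; choosing also
   a suitable odd residue modulo 4, the Chinese remainder theorem yields one c
   meeting all conditions.  Then gcd(c, q - 1) = 1, and gcd(c d1 - d2, q - 1) has
   no odd prime factor and is not divisible by 4, so it is 1 or 2 according to
   parity. *)
From Stdlib Require Import ZArith Znumtheory Lia.
Open Scope Z_scope.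

Lemma exists_prime_divisor n : 1 < n -> exists p, prime p /\ (p | n).
Proof.
  intros Hn. assert (Hn0 : 0 <= n) by lia. revert Hn.
  pattern n; apply Z_lt_induction; [|exact Hn0].
  intros x IH Hx.
  destruct (prime_dec x) as [Px|Px].
  - exists x; split; [exact Px | apply Z.divide_refl].
  - destruct (not_prime_divide x Hx Px) as [y [Hy Hyx]].
    destruct (IH y ltac:(lia) ltac:(lia)) as [p [Pp Hpy]].
    exists p; split; [exact Pp | exact (Z.divide_trans _ _ _ Hpy Hyx)].
Qed.

Lemma gcd_pos_r a b : b <> 0 -> 0 < Z.gcd a b.
Proof.
  intros Hb. pose proof (Z.gcd_nonneg a b).
  assert (Z.gcd a b <> 0) by (intros E; apply Z.gcd_eq_0 in E; lia). lia.
Qed.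

Lemma gcd_eq_1_of_no_common_prime a b : b <> 0 ->
  (forall p, prime p -> (p | a) -> (p | b) -> False) -> Z.gcd a b = 1.
Proof.
  intros Hb Hab. pose proof (gcd_pos_r a b Hb) as Hg.
  destruct (Z.eq_dec (Z.gcd a b) 1) as [E|E]; [exact E|].
  destruct (exists_prime_divisor (Z.gcd a b) ltac:(lia)) as [p [Pp Hp]].
  exfalso; apply (Hab p Pp).
  - exact (Z.divide_trans _ _ _ Hp (Z.gcd_divide_l a b)).
  - exact (Z.divide_trans _ _ _ Hp (Z.gcd_divide_r a b)).
Qed.

Lemma eq_1_or_2_of_prime_divisors_2 g : 0 < g ->
  (forall p, prime p -> (p | g) -> p = 2) -> ~ (4 | g) -> g = 1 \/ g = 2.
Proof.
  intros Hg Hprimes H4.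
  destruct (Z.eq_dec g 1) as [E|E]; [left; exact E|].
  destruct (exists_prime_divisor g ltac:(lia)) as [p [Pp Hpg]].
  rewrite (Hprimes p Pp Hpg) in Hpg. destruct Hpg as [h Hh].
  destruct (Z.eq_dec h 1) as [E1|E1]; [right; lia|].
  destruct (exists_prime_divisor h ltac:(lia)) as [r [Pr [k Hk]]].
  assert (Hr : r = 2) by (apply Hprimes; [exact Pr | exists (k * 2); lia]).
  exfalso; apply H4. exists k. lia.
Qed.

Lemma gcd_eq_1_or_2 a b : b <> 0 -> ~ (4 | a) ->
  (forall p, prime p -> p <> 2 -> (p | b) -> ~ (p | a)) ->
  Z.gcd a b = 1 \/ Z.gcd a b = 2.
Proof.
  intros Hb H4 Hodd.
  pose proof (Z.gcd_divide_l a b) as Ha; pose proof (Z.gcd_divide_r a b) as Hb'.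
  apply eq_1_or_2_of_prime_divisors_2.
  - exact (gcd_pos_r a b Hb).
  - intros p Pp Hp. destruct (Z.eq_dec p 2) as [E|Hp2]; [exact E|].
    exfalso; exact (Hodd p Pp Hp2 (Z.divide_trans _ _ _ Hp Hb') (Z.divide_trans _ _ _ Hp Ha)).
  - intros D; exact (H4 (Z.divide_trans _ _ _ D Ha)).
Qed.

Lemma divide_2_iff_even n : (2 | n) <-> Z.even n = true.
Proof.
  rewrite <- Z.mod_divide by lia. rewrite Zmod_even.
  destruct (Z.even n); split; congruence.
Qed.

Lemma gcd_1_or_2_parity a b : Z.gcd a b = 1 \/ Z.gcd a b = 2 ->
  Z.gcd a b = if andb (Z.even a) (Z.even b) then 2 else 1.
Proof.
  pose proof (Z.gcd_divide_l a b) as Da; pose proof (Z.gcd_divide_r a b) as Db.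
  intros [G|G]; rewrite G in Da, Db |- *.
  - destruct (Z.even a) eqn:Ea, (Z.even b) eqn:Eb; simpl; try reflexivity.
    assert (H2 : (2 | Z.gcd a b)) by (apply Z.gcd_greatest; apply divide_2_iff_even; assumption).
    rewrite G in H2. apply Z.divide_pos_le in H2; lia.
  - apply divide_2_iff_even in Da, Db. rewrite Da, Db. reflexivity.
Qed.

Lemma coprime_not_both_even a b : Z.gcd a b = 1 -> orb (Z.odd a) (Z.odd b) = true.
Proof.
  intros G. pose proof (gcd_1_or_2_parity a b (or_introl G)) as P.
  rewrite G, <- !Z.negb_odd in P.
  destruct (Z.odd a), (Z.odd b); simpl in *; congruence.
Qed.

Section ChineseRemainder.

Variable good : Z -> Z -> Prop.
Hypothesis good_periodic : forall p c k, good p c -> good p (c + p * k).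
Variables m c0 : Z.
Hypothesis good_local : forall p, prime p -> ~ (p | m) -> exists c, good p c.

Lemma exists_good_in_class n : 1 <= n -> exists c, (m | c - c0) /\
  forall p, prime p -> (p | n) -> ~ (p | m) -> good p c.
Proof.
  intros Hn. assert (Hn0 : 0 <= n) by lia. revert Hn.
  pattern n; apply Z_lt_induction; [|exact Hn0].
  intros x IH Hx.
  destruct (Z.eq_dec x 1) as [->|E].
  { exists c0; split; [exists 0; ring|].
    intros p Pp Hp _. apply Z.divide_pos_le in Hp; [|lia].
    apply prime_ge_2 in Pp; lia. }
  destruct (exists_prime_divisor x ltac:(lia)) as [p [Pp [y Hy]]].
  assert (Hp2 := prime_ge_2 p Pp).
  assert (Hy1 : 1 <= y) by nia.
  destruct (IH y ltac:(nia) Hy1) as [c1 [Hc1 Hgood1]].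
  assert (Hprimes : forall r, prime r -> (r | x) -> r = p \/ (r | y)).
  { intros r Pr Hr. rewrite Hy in Hr.
    destruct (prime_mult r Pr y p Hr) as [A|A]; [right; exact A|].
    left; apply prime_div_prime; assumption. }
  destruct (Zdivide_dec p (m * y)) as [Dp|Dp].
  - exists c1; split; [exact Hc1|].
    intros r Pr Hr Hrm. destruct (Hprimes r Pr Hr) as [->|Ry]; [|exact (Hgood1 r Pr Ry Hrm)].
    destruct (prime_mult p Pp m y Dp) as [Dm|Dy]; [contradiction|exact (Hgood1 p Pp Dy Hrm)].
  - destruct (rel_prime_bezout _ _ (prime_rel_prime p Pp _ Dp)) as [u v Huv].
    assert (Hpm : ~ (p | m)) by (intros D; apply Dp; apply Z.divide_mul_l; exact D).
    destruct (good_local p Pp Hpm) as [c2 Hc2].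
    (* c := c1 + m y v (c2 - c1) is c1 modulo m y and c2 modulo p *)
    exists (c1 + m * y * (v * (c2 - c1))); split.
    { replace (c1 + m * y * (v * (c2 - c1)) - c0) with (c1 - c0 + m * (y * (v * (c2 - c1)))) by ring.
      apply Z.divide_add_r; [exact Hc1 | apply Z.divide_factor_l]. }
    intros r Pr Hr Hrm. destruct (Hprimes r Pr Hr) as [->|[k Hk]].
    + assert (Hv : m * y * v = 1 - u * p) by (rewrite <- Huv; ring).
      replace (c1 + m * y * (v * (c2 - c1))) with (c2 + p * (u * (c1 - c2)))
        by (transitivity (c1 + m * y * v * (c2 - c1)); [rewrite Hv|]; ring).
      exact (good_periodic _ _ _ Hc2).
    + replace (c1 + m * y * (v * (c2 - c1))) with (c1 + r * (m * k * (v * (c2 - c1)))) by (rewrite Hk; ring).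
      apply good_periodic, Hgood1; [exact Pr | exists k; exact Hk | exact Hrm].
Qed.

End ChineseRemainder.

Section Multiplier.

Variables d1 d2 : Z.
Hypothesis hcop : Z.gcd d1 d2 = 1.

Definition avoids (p c : Z) : Prop := ~ (p | c) /\ ~ (p | c * d1 - d2).

Lemma avoids_periodic p c k : avoids p c -> avoids p (c + p * k).
Proof.
  intros [Hc Hx]; split; intros D; [apply Hc | apply Hx].
  - replace c with (c + p * k - p * k) by ring.
    apply Z.divide_sub_r; [exact D | apply Z.divide_factor_l].
  - replace (c * d1 - d2) with ((c + p * k) * d1 - d2 - p * (k * d1)) by ring.
    apply Z.divide_sub_r; [exact D | apply Z.divide_factor_l].
Qed.

(* c = 1 works unless p | d1 - d2, and then c = 2 works since 2 d1 - d2 = d1 + (d1 - d2). *)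
Lemma exists_avoiding p : prime p -> p <> 2 -> exists c, avoids p c.
Proof.
  intros Pp Hp2.
  assert (N1 : ~ (p | 1)) by (intros D; apply Z.divide_pos_le in D; [apply prime_ge_2 in Pp|]; lia).
  assert (N2 : ~ (p | 2)) by (intros D; apply Hp2, prime_div_prime; [exact Pp | exact prime_2 | exact D]).
  destruct (Zdivide_dec p (1 * d1 - d2)) as [D1|D1]; [|exists 1; split; assumption].
  exists 2; split; [exact N2|]. intros D2. apply N1. rewrite <- hcop.
  assert (Hd1 : (p | d1)).
  { replace d1 with (2 * d1 - d2 - (1 * d1 - d2)) by ring. apply Z.divide_sub_r; assumption. }
  apply Z.gcd_greatest; [exact Hd1|].
  replace d2 with (d1 - (1 * d1 - d2)) by ring. apply Z.divide_sub_r; assumption.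
Qed.

Lemma exists_odd_residue_mod_4 : exists c0, Z.odd c0 = true /\ ~ (4 | c0 * d1 - d2).
Proof.
  destruct (Zdivide_dec 4 (1 * d1 - d2)) as [[i Hi]|D]; [|exists 1; split; [reflexivity | exact D]].
  exists 3; split; [reflexivity|]. intros [j Hj].
  pose proof (coprime_not_both_even d1 d2 hcop) as Hodd.
  assert (Hd1 : d1 = 2 * (j - i)) by lia.
  assert (Hd2 : d2 = 2 * (j - 3 * i)) by lia.
  rewrite Hd1, Hd2, !Z.odd_mul in Hodd. discriminate.
Qed.

Lemma exists_good_multiplier n : 1 <= n -> exists c, Z.odd c = true /\ ~ (4 | c * d1 - d2) /\
  forall p, prime p -> p <> 2 -> (p | n) -> avoids p c.
Proof.
  intros Hn. destruct exists_odd_residue_mod_4 as [c0 [Hc0 H4]].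
  assert (Hlocal : forall p, prime p -> ~ (p | 4) -> exists c, avoids p c).
  { intros p Pp H. apply exists_avoiding; [exact Pp|]. intros ->; apply H; exists 2; ring. }
  destruct (exists_good_in_class avoids avoids_periodic 4 c0 Hlocal n Hn) as [c [[k Hk] Hc]].
  exists c; split; [|split].
  - replace c with (c0 + 2 * (2 * k)) by lia. rewrite Z.odd_add, Z.odd_mul, Hc0; reflexivity.
  - intros D; apply H4.
    replace (c0 * d1 - d2) with (c * d1 - d2 - 4 * (k * d1)) by nia.
    apply Z.divide_sub_r; [exact D | apply Z.divide_factor_l].
  - intros p Pp Hp2 Hpn. apply Hc; [exact Pp | exact Hpn|].
    intros D. apply Hp2, prime_div_prime; [exact Pp | exact prime_2|].
    apply (prime_mult p Pp 2 2) in D. destruct D; assumption.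
Qed.

End Multiplier.

Theorem lemma4p2 (q d1 d2 : Z) (hq : 2 <= q) (hd1 : 1 <= d1) (hd2 : 1 <= d2)
  (hcop : Z.gcd d1 d2 = 1) :
  exists c : Z, Z.gcd c (q - 1) = 1 /\
    Z.gcd (c * d1 - d2) (q - 1) =
      (if andb (Z.odd q) (andb (Z.odd d1) (Z.odd d2)) then 2 else 1).
Proof.
  destruct (exists_good_multiplier d1 d2 hcop (q - 1) ltac:(lia)) as [c [Hc [H4 Hgood]]].
  exists c; split.
  - apply gcd_eq_1_of_no_common_prime; [lia|]. intros p Pp Hpc Hpn.
    destruct (Z.eq_dec p 2) as [->|Hp2].
    + apply divide_2_iff_even in Hpc. rewrite <- Z.negb_odd, Hc in Hpc. discriminate.
    + exact (proj1 (Hgood p Pp Hp2 Hpn) Hpc).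
  - rewrite gcd_1_or_2_parity.
    + pose proof (coprime_not_both_even d1 d2 hcop) as Hodd.
      rewrite <- !Z.negb_odd, Z.odd_sub, Z.odd_sub, Z.odd_mul, Hc.
      destruct (Z.odd q), (Z.odd d1), (Z.odd d2); try discriminate; reflexivity.
    + apply gcd_eq_1_or_2; [lia | exact H4|].
      intros p Pp Hp2 Hpn. exact (proj2 (Hgood p Pp Hp2 Hpn)).
Qed.
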